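(* Let $G$ be a connected graph in $\mathcal{C}$ and $C$ an induced $C_5$ in $G$. Then there is no edge between $R$ and $Y$.
   Context: $\mathcal{C}=\mathrm{Free}(\text{claw}, 4K_1, \text{5-wheel}, C_5\text{-twin}, P_5\text{-twin}, K_5-e)$, where $\mathrm{Free}(L)$ is the class of graphs with no induced subgraph isomorphic to a member of $L$; the claw is $K_{1,3}$; $4K_1$ is the edgeless graph on 4 vertices; the 5-wheel is $C_5$ plus a vertex adjacent to all five cycle vertices; the $C_5$-twin is $C_5$ plus a new vertex adjacent to one cycle vertex $v$ and both cycle-neighbours of $v$; the $P_5$-twin is a path $p_1p_2p_3p_4p_5$ plus a new vertex adjacent to exactly $p_2,p_3,p_4$; $K_5-e$ is $K_5$ minus one edge. Given an induced cycle $C$ of length 5 with vertices $0,\dots,4$ in cyclic order (indices taken mod 5): $R$ is the set of vertices outside $C$ with no neighbour in $C$; $X_j$ is the set of vertices outside $C$ whose neighbourhood in $C$ is exactly $\{j,j+1\}$; $Y_j$ is the set of vertices outside $C$ whose neighbourhood in $C$ is exactly $\{j,j+1,j+2,j+3\}$; $X=\bigcup_j X_j$, $Y=\bigcup_j Y_j$. *)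

From mathcomp Require Import all_boot.
Set Implicit Arguments. Unset Strict Implicit. Unset Printing Implicit Defensive.

Definition cyc5 (i j : nat) : bool :=
  (j == (i + 1) %% 5) || (i == (j + 1) %% 5).

Definition induced_copy (T : finType) (e : rel T) (n : nat) (h : rel 'I_n) : Prop :=
  exists f : 'I_n -> T, injective f /\ forall i j, e (f i) (f j) = h i j.

Definition claw_rel : rel 'I_4 := fun i j =>
  (i != j) && ((val i == 0) || (val j == 0)).
Definition fourK1_rel : rel 'I_4 := fun _ _ => false.
Definition wheel5_rel : rel 'I_6 := fun i j =>
  if (val i < 5) && (val j < 5) then cyc5 i j
  else (val i == 5) (+) (val j == 5).
(* C5-twin: cycle 0..4, vertex 5 adjacent to 0 and its cycle-neighbours 4, 1 *)
Definition C5twin_rel : rel 'I_6 := fun i j =>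
  if (val i < 5) && (val j < 5) then cyc5 i j
  else if val i == 5 then val j \in [:: 4; 0; 1]
  else val i \in [:: 4; 0; 1].
Definition P5twin_rel : rel 'I_6 := fun i j =>
  if (val i < 5) && (val j < 5) then (val j == (val i).+1) || (val i == (val j).+1)
  else if val i == 5 then val j \in [:: 1; 2; 3]
  else val i \in [:: 1; 2; 3].
Definition K5e_rel : rel 'I_5 := fun i j =>
  (i != j) && ~~ ([&& val i <= 1 & val j <= 1]).

Definition in_class (T : finType) (e : rel T) : Prop :=
  ~ induced_copy e claw_rel /\ ~ induced_copy e fourK1_rel /\
  ~ induced_copy e wheel5_rel /\ ~ induced_copy e C5twin_rel /\
  ~ induced_copy e P5twin_rel /\ ~ induced_copy e K5e_rel.

Definition simple_graph (T : finType) (e : rel T) : Prop :=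
  symmetric e /\ irreflexive e.

Definition connected_graph (T : finType) (e : rel T) : Prop :=
  forall x y : T, connect e x y.

Definition induced_C5 (T : finType) (e : rel T) (c : 'I_5 -> T) : Prop :=
  injective c /\ forall i j : 'I_5, e (c i) (c j) = cyc5 i j.

Definition nbC (T : finType) (e : rel T) (c : 'I_5 -> T) (v : T) : {set 'I_5} :=
  [set i | e v (c i)].

Definition outside (T : finType) (c : 'I_5 -> T) (v : T) : bool := v \notin codom c.

Definition inR (T : finType) (e : rel T) (c : 'I_5 -> T) (v : T) : bool :=
  outside c v && (nbC e c v == set0).

Definition inYj (T : finType) (e : rel T) (c : 'I_5 -> T) (j : 'I_5) (v : T) : bool :=
  outside c v &&
  (nbC e c v == [set i : 'I_5 | [|| val i == val j, val i == (val j + 1) %% 5,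
                                    val i == (val j + 2) %% 5 | val i == (val j + 3) %% 5]]).

Definition inY (T : finType) (e : rel T) (c : 'I_5 -> T) (v : T) : bool :=
  [exists j : 'I_5, inYj e c j v].

From mathcomp Require Import all_boot.

(* A vertex of [Y_j] sees the two non-adjacent cycle vertices [c j] and [c (j+2)];
   together with a neighbour in [R], which sees no cycle vertex, they form a claw. *)

Set Implicit Arguments. Unset Strict Implicit. Unset Printing Implicit Defensive.

Section ClawFree.

Variables (T : finType) (e : rel T).
Hypotheses (e_sym : symmetric e) (e_irr : irreflexive e)
           (no_claw : ~ induced_copy e claw_rel).

Lemma claw_free_independent_nbrs (y a b d : T) :
  uniq [:: a; b; d] -> e y a -> e y b -> e y d ->
  e a b = false -> e a d = false -> e b d = false -> False.
Proof.
move=> uabd ya yb yd ab ad bd; apply: no_claw.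
have y_out : y \notin [:: a; b; d].
  by rewrite !inE; apply/or3P=> -[] /eqP yx; [move: ya | move: yb | move: yd];
     rewrite yx e_irr.
have uniq_all : uniq [:: y; a; b; d] by rewrite cons_uniq y_out.
exists (fun i : 'I_4 => nth y [:: y; a; b; d] i); split.
  by move=> i j /eqP; rewrite nth_uniq // => /eqP /val_inj.
move=> [[|[|[|[|?]]]] ?] [[|[|[|[|?]]]] ?] //=;
  by rewrite /claw_rel /= ?e_irr // ?ya ?yb ?yd ?ab ?ad ?bd // e_sym
             ?ya ?yb ?yd ?ab ?ad ?bd.
Qed.

End ClawFree.

Section InducedC5.

Variables (T : finType) (e : rel T) (c : 'I_5 -> T).

Lemma outside_neq_cycle (v : T) (i : 'I_5) : outside c v -> v != c i.
Proof. by move=> ov; apply: contraNneq ov => ->; rewrite codom_f. Qed.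

Lemma inR_nadj_cycle (r : T) (i : 'I_5) : inR e c r -> e r (c i) = false.
Proof.
by case/andP=> _ /eqP nb_r; have := in_set0 i; rewrite -nb_r inE.
Qed.

Lemma inYj_nonadjacent_nbrs (j : 'I_5) (y : T) :
  inYj e c j y -> exists a b : 'I_5,
    [/\ e y (c a), e y (c b), a != b & cyc5 a b = false].
Proof.
case/andP=> _ /eqP nb_y.
have y_c i : e y (c i) = (i \in nbC e c y) by rewrite inE.
exists j, (inord ((j + 2) %% 5)).
rewrite !y_c nb_y !inE /= inordK ?ltn_pmod // eqxx -(inj_eq val_inj) /= inordK
        ?ltn_pmod //.
by clear nb_y; case: j => -[|[|[|[|[|?]]]]] ?.
Qed.

End InducedC5.

Theorem claim9 (T : finType) (e : rel T) (c : 'I_5 -> T) :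
  simple_graph e -> connected_graph e -> in_class e -> induced_C5 e c ->
  forall r y : T, inR e c r -> inY e c y -> ~~ e r y.
Proof.
move=> [e_sym e_irr] _ [no_claw _] [c_inj e_c] r y r_R /existsP [j y_Yj].
apply/negP=> ry.
have [a [b [ya yb ab nab]]] := inYj_nonadjacent_nbrs y_Yj.
have r_out : outside c r by case/andP: r_R.
have r_ca i : e r (c i) = false := inR_nadj_cycle i r_R.
apply: (claw_free_independent_nbrs e_sym e_irr no_claw _ _ ya yb (r_ca a) (r_ca b)).
- by rewrite /= !inE negb_or !(outside_neq_cycle _ r_out) (inj_eq c_inj) ab.
- by rewrite e_sym.
- by rewrite e_c.
Qed.
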